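(* Let $n\ge1$, let $H\subseteq Q_n$ be any set of more than $2^{n-1}$ vertices, and let $C>0$. Then there exists $\beta\in H$ (depending on $C$) such that \[ \sqrt{n}\ \le\ C\cdot\#\{\gamma\in H:\gamma\to\beta\}+\frac{1}{C}\cdot\#\{\gamma\in H:\beta\to\gamma\}. \]
   Context: $Q_n=\{0,1\}^n$ is the boolean cube, viewed as a graph in which two vertices are adjacent iff they differ in exactly one coordinate. For $\gamma,\beta\in Q_n$ write $\gamma\to\beta$ if $\gamma$ and $\beta$ differ in exactly one coordinate $k$ and $\gamma_k=0$, $\beta_k=1$ (i.e. $\beta$ is obtained from $\gamma$ by changing a single $0$ to $1$). *)

From HB Require Import structures.
From mathcomp Require Import all_boot all_order all_algebra.
Set Implicit Arguments. Unset Strict Implicit. Unset Printing Implicit Defensive.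

(* The boolean cube Q_n = {0,1}^n, vertices as finite functions 'I_n -> bool
   (false = 0, true = 1). *)
Definition cube (n : nat) := {ffun 'I_n -> bool}.

(* up g b  <=>  g -> b : g and b differ in exactly one coordinate k,
   with g k = 0 and b k = 1. *)
Definition up (n : nat) (g b : cube n) : bool :=
  [exists k : 'I_n, [&& ~~ g k, b k & [forall j : 'I_n, (j != k) ==> (g j == b j)]]].

From HB Require Import structures.
From mathcomp Require Import all_boot all_order all_algebra.
From mathcomp Require Import zify.
Import Order.TTheory GRing.Theory Num.Theory.
Local Open Scope ring_scope.
Set Implicit Arguments. Unset Strict Implicit. Unset Printing Implicit Defensive.

(* A weighted version of Huang's sensitivity argument.
   Index the vertices of Q_n by 'I_(2^n), following the recursive splitting of
   the last coordinate, and define the matrices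
       B_0 = 0,   B_(n+1) = [[B_n, C I], [C^-1 I, -B_n]],
   so that B_n^2 = n I and |B_n(g,b)| equals C if g -> b, C^-1 if b -> g, and
   0 otherwise.
   With e = +-sqrt n and A the complement of H (of size < 2^(n-1)) the
   column sum at b is exactly the right-hand side of the theorem. *)

(* If B^2 = s^2 I then (B - s I)(B + s I) = 0, so the image of B - s I lies
   in the kernel of B + s I; hence the two kernels of B + s I and B - s I have
   total dimension at least N, and one of them has dimension at least N/2. *)
Lemma half_rank_eigenspace (R : fieldType) (N : nat) (B : 'M[R]_N) (s : R) :
  B *m B = (s ^+ 2)%:M ->
  exists2 e : R, e ^+ 2 = s ^+ 2 & (N <= (\rank (kermx (B + e%:M))).*2)%N.
Proof.
move=> Bsq; set P := B + s%:M; set Q := B + (- s)%:M.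
have QP : Q *m P = 0.
  rewrite mulmxDl !mulmxDr Bsq mul_mx_scalar !mul_scalar_mx scale_scalar_mx.
  by rewrite scaleNr addrA addrK mulNr -expr2 raddfN addrN.
have rQ : (\rank Q <= N - \rank P)%N.
  by rewrite -mxrank_ker; apply: mxrankS; apply/sub_kermxP.
have rP := rank_leq_col P.
case: (leqP (\rank P) (\rank Q)) => hPQ.
  by exists s => //; rewrite -/P mxrank_ker -addnn; lia.
by exists (- s); [rewrite sqrrN | rewrite -/Q mxrank_ker -addnn; lia].
Qed.

Lemma vanishing_vector (R : fieldType) (m N : nat) (Y : 'M[R]_(m, N))
    (A : {pred 'I_N}) :
  (#|A| < \rank Y)%N ->
  exists v : 'rV_N, [/\ (v <= Y)%MS, v != 0 & {in A, forall i, v 0 i = 0}].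
Proof.
move=> rankY.
(* v *m E lists the coordinates of v indexed by A. *)
pose E : 'M[R]_(N, #|A|) := \matrix_(i, k) (i == enum_val k)%:R.
have hr := mxrank_mul_ker Y E; have hle := rank_leq_col (Y *m E).
have : (Y :&: kermx E)%MS != 0.
  by rewrite -mxrank_eq0; apply/eqP => h0; rewrite h0 addn0 in hr; lia.
case/rowV0Pn => v vYE v0; exists v; split=> //.
  exact: submx_trans vYE (capmxSl _ _).
move=> i Ai; move/sub_kermxP: (submx_trans vYE (capmxSr _ _)).
move=> /matrixP/(_ 0 (enum_rank_in Ai i)); rewrite !mxE (bigD1 i) //= mxE.
rewrite enum_rankK_in // eqxx mulr1 big1 ?addr0 // => j ji.
by rewrite mxE enum_rankK_in // (negbTE ji) mulr0.
Qed.

(* Column version of Gershgorin's bound, evaluated at a coordinate of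
   maximal modulus of an eigenvector supported on S. *)
Lemma eigenvalue_le_column_sum (R : realFieldType) (N : nat) (B : 'M[R]_N)
    (v : 'rV_N) (e : R) (S : {pred 'I_N}) :
  v != 0 -> v *m B = e *: v -> {in [predC S], forall i, v 0 i = 0} ->
  exists2 b, b \in S & `|e| <= \sum_(j in S) `|B j b|.
Proof.
move=> v0 vB vS.
have [i0 vi0] : exists i0, v 0 i0 != 0.
  apply/existsP; apply: contraR v0 => /existsPn vz.
  by apply/eqP/rowP => i; rewrite mxE; apply/eqP/negPn.
have [b _ bmax] := @arg_maxP _ _ _ i0 xpredT (fun j => `|v 0 j|) isT.
have vb0 : 0 < `|v 0 b| by rewrite (lt_le_trans _ (bmax i0 isT)) ?normr_gt0.
have bS : b \in S.
  by apply: contraTT vb0 => bS; rewrite vS ?normr0 ?ltxx // inE.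
exists b => //; rewrite -(ler_pM2r vb0).
have -> : `|e| * `|v 0 b| = `|(v *m B) 0 b| by rewrite vB mxE normrM.
rewrite mxE.
apply: le_trans (ler_norm_sum _ _ _) _.
rewrite mulr_suml (bigID (mem S)) /= [X in _ + X]big1 ?addr0 => [|j jS]; last first.
  by rewrite vS ?mul0r ?normr0.
apply: ler_sum => j _; rewrite normrM [_ * `|v 0 b|]mulrC.
by apply: ler_wpM2r; [exact: normr_ge0 | exact: bmax].
Qed.

(* The number of vertices of Q_n, with the recursion that lets 'I_(sz n.+1)
   be split into two copies of 'I_(sz n). *)
Fixpoint sz (n : nat) : nat := if n is n'.+1 then (sz n' + sz n')%N else 1%N.

Lemma szE (n : nat) : sz n = (2 ^ n)%N.
Proof. by elim: n => //= n ->; rewrite expnS mul2n addnn. Qed.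

Definition ext (n : nat) (g : cube n) (c : bool) : cube n.+1 :=
  [ffun k => if unlift ord_max k is Some k' then g k' else c].

Lemma ext_max (n : nat) (g : cube n) (c : bool) : ext g c ord_max = c.
Proof. by rewrite ffunE unlift_none. Qed.

Lemma ext_lift (n : nat) (g : cube n) (c : bool) (k : 'I_n) :
  ext g c (lift ord_max k) = g k.
Proof. by rewrite ffunE liftK. Qed.

Lemma ext_inj (n : nat) (g h : cube n) (c d : bool) :
  ext g c = ext h d -> g = h /\ c = d.
Proof.
move=> e; split; last by rewrite -(ext_max g c) -(ext_max h d) e.
by apply/ffunP => k; rewrite -(ext_lift g c) -(ext_lift h d) e.
Qed.

Lemma upP (n : nat) (g b : cube n) :
  reflect (exists k, [/\ ~~ g k, b k & forall j, j != k -> g j = b j]) (up g b).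
Proof.
apply: (iffP existsP) => [[k /and3P[gk bk /forallP E]]|[k [gk bk E]]].
  by exists k; split=> // j jk; apply/eqP; move/implyP: (E j); apply.
by exists k; rewrite gk bk /=; apply/forallP => j; apply/implyP => /E ->.
Qed.

Lemma up0 (g b : cube 0) : up g b = false.
Proof. by apply/upP => -[[]]. Qed.

Lemma up_same (n : nat) (g h : cube n) (c : bool) :
  up (ext g c) (ext h c) = up g h.
Proof.
apply/upP/upP => [[k [gk hk E]]|[k [gk hk E]]].
  case: (unliftP ord_max k) => [k'|] ek; subst k; last first.
    by rewrite !ext_max in gk hk; rewrite hk in gk.
  rewrite !ext_lift in gk hk; exists k'; split=> // j jk.
  by have := E (lift ord_max j); rewrite !ext_lift; apply; rewrite (inj_eq lift_inj).
exists (lift ord_max k); rewrite !ext_lift; split=> // j.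
case: (unliftP ord_max j) => [j'|] ->; rewrite ?ext_lift ?ext_max //.
by rewrite (inj_eq lift_inj) => /E.
Qed.

Lemma up_FT (n : nat) (g h : cube n) : up (ext g false) (ext h true) = (g == h).
Proof.
apply/upP/eqP => [[k [gk hk E]]|->].
  case: (unliftP ord_max k) => [k'|] ek; subst k.
    by have := E ord_max (neq_lift _ _); rewrite !ext_max.
  apply/ffunP => j; have := E (lift ord_max j); rewrite !ext_lift; apply.
  by rewrite eq_sym neq_lift.
exists ord_max; rewrite !ext_max; split=> // j.
by case: (unliftP ord_max j) => [j'|] ->; rewrite ?eqxx // !ext_lift.
Qed.

Lemma up_TF (n : nat) (g h : cube n) : up (ext g true) (ext h false) = false.
Proof.
apply/upP => -[k [gk hk E]].
case: (unliftP ord_max k) => [k'|] ek; subst k; last by rewrite ext_max in gk.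
by have := E ord_max (neq_lift _ _); rewrite !ext_max.
Qed.

Fixpoint vertex (n : nat) : 'I_(sz n) -> cube n :=
  match n return 'I_(sz n) -> cube n with
  | 0 => fun _ => [ffun _ => false]
  | n'.+1 => fun i => match @split (sz n') (sz n') i with
                      | inl j => ext (vertex j) false
                      | inr j => ext (vertex j) true end
  end.

Lemma vertexL (n : nat) (i : 'I_(sz n)) :
  vertex (unsplit (inl i : 'I_(sz n) + 'I_(sz n)) : 'I_(sz n.+1))
  = ext (vertex i) false.
Proof. by rewrite /= (unsplitK (inl _ i)). Qed.

Lemma vertexR (n : nat) (i : 'I_(sz n)) :
  vertex (unsplit (inr i : 'I_(sz n) + 'I_(sz n)) : 'I_(sz n.+1))
  = ext (vertex i) true.
Proof. by rewrite /= (unsplitK (inr _ i)). Qed.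

Lemma vertex_inj (n : nat) : injective (@vertex n).
Proof.
elim: n => [|n IH] i j; first by rewrite (ord1 i) (ord1 j).
rewrite -[i]splitK -[j]splitK.
by case: (split i) => i'; case: (split j) => j';
  rewrite ?vertexL ?vertexR => /ext_inj [/IH -> e2].
Qed.

Lemma vertex_bij (n : nat) : bijective (@vertex n).
Proof.
apply: inj_card_bij; first exact: vertex_inj.
by rewrite card_ord szE card_ffun card_bool card_ord.
Qed.

Definition outside (n : nat) (H : {set cube n}) : {pred 'I_(sz n)} :=
  [pred i | vertex i \notin H].

Lemma card_outside (n : nat) (H : {set cube n}) :
  (#|outside H| + #|H|)%N = (2 ^ n)%N.
Proof.
have inH : #|[pred i | vertex i \in H]| = #|H|.
  rewrite -(on_card_preimset (onW_bij _ (vertex_bij n))).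
  by apply: eq_card => i; rewrite !inE.
by rewrite -inH addnC -szE -[in RHS](card_ord (sz n)) -(cardC [pred i | vertex i \in H]).
Qed.

Section WeightedSignedCube.
Variables (R : rcfType) (C : R).
Hypothesis C_gt0 : 0 < C.

Fixpoint Bm (n : nat) : 'M[R]_(sz n) :=
  match n return 'M[R]_(sz n) with
  | 0 => 0
  | n'.+1 => block_mx (Bm n') C%:M (C^-1)%:M (- Bm n')
  end.

(* Block multiplication: the diagonal blocks give B_n^2 + (C I)(C^-1 I) =
   (n + 1) I, and the off-diagonal ones B_n C - C B_n = 0: B_n^2 = n I. *)
Lemma Bm_sq (n : nat) : Bm n *m Bm n = (n%:R)%:M.
Proof.
have C0 : C != 0 by rewrite gt_eqF.
elim: n => [|n IH]; first by rewrite mul0mx raddf0.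
rewrite /= mulmx_block IH (scalar_mx_block (sz n) (sz n)); congr block_mx.
- by rewrite mul_scalar_mx scale_scalar_mx divff // -raddfD /= -natr1.
- by rewrite mul_mx_scalar mul_scalar_mx scalerN addrN.
- by rewrite mul_mx_scalar mul_scalar_mx scalerN addrN.
- by rewrite mul_scalar_mx scale_scalar_mx mulVf // mulNmx mulmxN opprK IH
     -raddfD /= addrC natr1.
Qed.

Lemma Bm_abs (n : nat) (i j : 'I_(sz n)) :
  `|Bm n i j| = (up (vertex i) (vertex j))%:R * C
              + (up (vertex j) (vertex i))%:R * C^-1.
Proof.
elim: n i j => [|n IH] i j; first by rewrite !up0 mxE normr0 !mul0r addr0.
rewrite -[i]splitK -[j]splitK.
case: (split i) => i'; case: (split j) => j'; rewrite ?vertexL ?vertexR.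
- by rewrite [unsplit _]/= [unsplit (inl j')]/= block_mxEul !up_same IH.
- rewrite [unsplit _]/= [unsplit (inr j')]/= block_mxEur up_FT up_TF.
  rewrite (inj_eq (@vertex_inj _)) mxE; case: (i' == j') => /=.
    by rewrite gtr0_norm // mul1r mul0r addr0.
  by rewrite normr0 !mul0r addr0.
- rewrite [unsplit _]/= [unsplit (inl j')]/= block_mxEdl up_FT up_TF.
  rewrite (inj_eq (@vertex_inj _)) mxE [j' == i']eq_sym; case: (i' == j') => /=.
    by rewrite gtr0_norm ?invr_gt0 // mul1r mul0r add0r.
  by rewrite normr0 !mul0r addr0.
- by rewrite [unsplit _]/= [unsplit (inr j')]/= block_mxEdr !up_same mxE normrN IH.
Qed.

Lemma Bm_column_sum (n : nat) (H : {set cube n}) (b : 'I_(sz n)) :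
  \sum_(j in [pred j | vertex j \in H]) `|Bm n j b|
  = C * (#|[set g in H | up g (vertex b)]|)%:R
  + C^-1 * (#|[set g in H | up (vertex b) g]|)%:R.
Proof.
rewrite -!sum1_card !natr_sum !mulr_sumr !(big_mkcond (mem [set _ in H | _])).
rewrite -big_split /=.
rewrite (reindex (@vertex n)) /=; last exact: onW_bij (vertex_bij n).
rewrite big_mkcond; apply: eq_bigr => j _; rewrite Bm_abs !inE.
by case: (vertex j \in H); case: up; case: up;
  rewrite /= ?mulr0 ?mulr1 ?mul1r ?mul0r ?addr0 ?add0r.
Qed.

Lemma vertex_of_kernel (n : nat) (H : {set cube n}) (e : R) :
  (#|outside H| < \rank (kermx (Bm n + e%:M)))%N ->
  exists2 b : cube n, b \in H &
   `|e| <= C * (#|[set g in H | up g b]|)%:R + C^-1 * (#|[set g in H | up b g]|)%:R.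
Proof.
case/vanishing_vector => v [/sub_kermxP vker v0 vH].
have vB : v *m Bm n = (- e) *: v.
  by apply/eqP; rewrite -subr_eq0 scaleNr opprK -mul_mx_scalar -mulmxDr vker.
have [b bH] := eigenvalue_le_column_sum v0 vB (S := [pred j | vertex j \in H]) vH.
by rewrite normrN Bm_column_sum; exists (vertex b).
Qed.

End WeightedSignedCube.

Theorem mainTheorem4 (R : rcfType) (n : nat) (H : {set cube n}) (C : R) :
  (1 <= n)%N -> (2 ^ n.-1 < #|H|)%N -> 0 < C ->
  exists2 b : cube n, b \in H &
    Num.sqrt (n%:R : R) <=
      C * (#|[set g in H | up g b]|)%:R + C^-1 * (#|[set g in H | up b g]|)%:R.
Proof.
move=> n_ge1 bigH C_gt0.
set s := Num.sqrt (n%:R : R).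
have s2 : s ^+ 2 = n%:R by rewrite sqr_sqrtr // ler0n.
have Bsq : Bm C n *m Bm C n = (s ^+ 2)%:M by rewrite Bm_sq // s2.
have [e e2 rank_e] := half_rank_eigenspace Bsq.
have e_abs : `|e| = s by rewrite -sqrtr_sqr e2 s2.
have half : (2 ^ n = 2 ^ n.-1 + 2 ^ n.-1)%N by rewrite addnn -mul2n -expnS prednK.
(* The complement of H has fewer than 2^(n-1) <= rank elements. *)
have [|b bH] := @vertex_of_kernel _ _ C_gt0 _ H e.
  move: rank_e half (card_outside H) (szE n) bigH; rewrite -addnn.
  by move: (\rank _) #|outside H| #|H| (2 ^ n)%N (2 ^ n.-1)%N => *; lia.
by rewrite e_abs; exists b.
Qed.
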